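(* Let $\alpha>0$, $\nu:=\nu(\alpha)$, and let $(a_n)_{n\ge1}$ be a positive sequence with $\lim_{n\to\infty}a_ne^{-\nu n}=0$. Let $(\chi_t)_{t\ge1}$ be defined by $\chi_t:=\max\{a_t,\frac{t-1}{\alpha}\chi_1,\dots,\frac1\alpha\chi_{t-1}\}$. For $t\ge1$ and integers $i$, set $\tilde\chi_i(t):=-\infty$ if $i<0$, $\tilde\chi_0(t):=a_t$, and $\tilde\chi_i(t):=(t-i)\chi_i/\alpha$ for $1\le i\le t-1$, and define $$I_t:=\max\{i<t:\ \chi_t=\tilde\chi_i(t)\}.$$ Then $\sup_{t\ge1}(t-I_t)<\infty$.
   Context: For $\alpha>0$, let $T=T(\alpha)\in\mathbb N$ be the unique positive integer with $\frac{(T-1)^T}{T^{T-1}}<\alpha\le\frac{T^{T+1}}{(T+1)^T}$, and define $\nu(\alpha):=\frac1T\log\frac T\alpha$. *)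

From Stdlib Require Import Reals Lra Lia List.
Import ListNotations.
Open Scope R_scope.

Definition T_spec (alpha : R) (T : nat) : Prop :=
  (1 <= T)%nat /\
  (INR T - 1) ^ T / INR T ^ (T - 1) < alpha /\
  alpha <= INR T ^ (T + 1) / (INR T + 1) ^ T.

Definition nu_of (alpha : R) (T : nat) : R := / INR T * ln (INR T / alpha).

(* chis a alpha n = [chi_1; ...; chi_n], where
   chi_t = max { a_t, (t-1)/alpha chi_1, ..., 1/alpha chi_{t-1} }. *)
Fixpoint chis (a : nat -> R) (alpha : R) (n : nat) : list R :=
  match n with
  | O => []
  | S m =>
      let l := chis a alpha m in
      l ++ [fold_left Rmax
              (map (fun i => INR (S m - i) / alpha * nth (i - 1) l 0) (seq 1 m))
              (a (S m))]
  end.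

Definition chi (a : nat -> R) (alpha : R) (t : nat) : R :=
  nth (t - 1) (chis a alpha t) 0.

(* tilde chi_i(t) for 0 <= i (the case i < 0 is -infinity, which never
   equals the real number chi_t and is therefore irrelevant for I_t). *)
Definition chitilde (a : nat -> R) (alpha : R) (i t : nat) : R :=
  match i with
  | O => a t
  | _ => INR (t - i) / alpha * chi a alpha i
  end.

(* largest i < n with P i (default 0 if none) *)
Fixpoint maxidx (P : nat -> bool) (n : nat) : nat :=
  match n with
  | O => O
  | S m => if P m then m else maxidx P m
  end.

Definition I_t (a : nat -> R) (alpha : R) (t : nat) : nat :=
  maxidx (fun i => if Req_EM_T (chi a alpha t) (chitilde a alpha i t)
                   then true else false) t.

(** Every term of the defining maximum bounds [chi_t] from below, so
    [chi_t >= (T/alpha) chi_(t-T)], and the choice [e^(nu T) = T/alpha] makes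
    [chi_t] grow at least like [c e^(nu t)].  Since [a_t e^(-nu t) -> 0], the
    maximum is eventually attained at some index [i >= 1].  If [i] were far
    from [t], inserting the intermediate index [j = i + N] with [N > 2 alpha]
    would give [chi_t >= (t-j) N chi_i / alpha^2 > (t-i) chi_i / alpha],
    contradicting [chi_t = (t-i) chi_i / alpha]; hence [t - I_t < 2N]. *)
From Stdlib Require Import Reals Lra Lia List Arith.
Open Scope R_scope.

Lemma fold_left_Rmax_ge_init (l : list R) (x : R) : x <= fold_left Rmax l x.
Proof.
  revert x; induction l as [|y l IH]; intros x; simpl; [lra|].
  eapply Rle_trans; [apply Rmax_l | apply IH].
Qed.

Lemma fold_left_Rmax_ge_In (l : list R) (x y : R) :
  In y l -> y <= fold_left Rmax l x.
Proof.
  revert x; induction l as [|z l IH]; intros x Hy; simpl in *; [tauto|].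
  destruct Hy as [<- | Hy].
  - eapply Rle_trans; [apply Rmax_r | apply fold_left_Rmax_ge_init].
  - apply IH; exact Hy.
Qed.

Lemma fold_left_Rmax_attained (l : list R) (x : R) :
  fold_left Rmax l x = x \/ In (fold_left Rmax l x) l.
Proof.
  revert x; induction l as [|y l IH]; intros x; simpl; auto.
  destruct (IH (Rmax x y)) as [-> | H]; auto.
  apply Rmax_case; auto.
Qed.

Lemma maxidx_ge (P : nat -> bool) (n i : nat) :
  (i < n)%nat -> P i = true -> (i <= maxidx P n)%nat.
Proof.
  induction n as [|n IH]; intros Hin HPi; simpl; [lia|].
  destruct (P n) eqn:HPn; [lia|].
  destruct (Nat.eq_dec i n) as [-> | Hne]; [congruence|].
  apply IH; [lia | exact HPi].
Qed.

Lemma positive_lower_bound_on_range (f : nat -> R) (n : nat) :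
  (forall j, (1 <= j)%nat -> 0 < f j) ->
  exists c, 0 < c /\ forall j, (1 <= j)%nat -> (j <= n)%nat -> c <= f j.
Proof.
  intros Hf; induction n as [|n [c [Hc Hle]]].
  - exists 1; split; [lra | intros; lia].
  - exists (Rmin c (f (S n))); split.
    + apply Rmin_case; [exact Hc | apply Hf; lia].
    + intros j Hj1 Hjn; destruct (Nat.eq_dec j (S n)) as [-> | Hne].
      * apply Rmin_r.
      * eapply Rle_trans; [apply Rmin_l | apply Hle; lia].
Qed.

(* [c] is the minimum of [f t e^(-nu t)] over [1 <= t <= T]; strong induction
   on [t] propagates the bound in steps of [T]. *)
Lemma exp_lower_bound_of_lag (f : nat -> R) (T : nat) (nu : R) :
  (1 <= T)%nat ->
  (forall t, (1 <= t)%nat -> 0 < f t) ->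
  (forall t, (T < t)%nat -> exp (nu * INR T) * f (t - T)%nat <= f t) ->
  exists c, 0 < c /\ forall t, (1 <= t)%nat -> c * exp (nu * INR t) <= f t.
Proof.
  intros HT Hpos Hlag.
  destruct (positive_lower_bound_on_range (fun t => f t * exp (- (nu * INR t))) T)
    as [c [Hc Hmin]].
  { intros t Ht; apply Rmult_lt_0_compat; [apply Hpos; exact Ht | apply exp_pos]. }
  exists c; split; [exact Hc|].
  intros t; induction t as [t IH] using lt_wf_ind; intros Ht.
  destruct (le_lt_dec t T) as [HtT | HtT].
  - specialize (Hmin t Ht HtT); cbv beta in Hmin.
    assert (Hinv : exp (- (nu * INR t)) * exp (nu * INR t) = 1).
    { rewrite <- exp_plus, Rplus_opp_l; apply exp_0. }
    assert (He := exp_pos (nu * INR t)).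
    apply (Rmult_le_compat_r (exp (nu * INR t))) in Hmin; [|lra].
    rewrite Rmult_assoc, Hinv, Rmult_1_r in Hmin; exact Hmin.
  - assert (IHt := IH (t - T)%nat ltac:(lia) ltac:(lia)).
    specialize (Hlag t HtT).
    replace (INR t) with (INR (t - T) + INR T) by (rewrite minus_INR by lia; ring).
    rewrite Rmult_plus_distr_l, exp_plus.
    assert (He := exp_pos (nu * INR T)).
    apply (Rmult_le_compat_r (exp (nu * INR T))) in IHt; [nra | lra].
Qed.

Lemma exp_nu_of_mul (alpha : R) (T : nat) :
  0 < alpha -> (1 <= T)%nat -> exp (nu_of alpha T * INR T) = INR T / alpha.
Proof.
  intros Halpha HT.
  assert (HTpos : 0 < INR T) by (apply lt_0_INR; lia).
  unfold nu_of.
  replace (/ INR T * ln (INR T / alpha) * INR T) with (ln (INR T / alpha))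
    by (field; lra).
  apply exp_ln, Rdiv_lt_0_compat; lra.
Qed.

(* [k/alpha * x < (k-n)/alpha * (n/alpha * x)] reduces to [k alpha < (k-n) n],
   which holds as soon as [n > 2 alpha] and [k >= 2n]. *)
Lemma two_step_gain (alpha k n x : R) :
  0 < alpha -> 2 * alpha < n -> 2 * n <= k -> 0 < x ->
  k / alpha * x < (k - n) / alpha * (n / alpha * x).
Proof.
  intros Halpha Hn Hk Hx.
  replace ((k - n) / alpha * (n / alpha * x)) with ((k - n) * n / alpha * (x / alpha))
    by (field; lra).
  replace (k / alpha * x) with (k * alpha / alpha * (x / alpha)) by (field; lra).
  assert (0 < x / alpha) by (apply Rdiv_lt_0_compat; lra).
  apply Rmult_lt_compat_r; [assumption|].
  apply Rmult_lt_compat_r; [apply Rinv_0_lt_compat; lra | nra].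
Qed.

Section Chi.

Variables (a : nat -> R) (alpha : R).

Lemma chis_length (n : nat) : length (chis a alpha n) = n.
Proof.
  induction n as [|n IH]; simpl; [reflexivity|].
  rewrite length_app, IH; simpl; lia.
Qed.

Lemma chis_nth_add (n k i : nat) :
  (i < n)%nat -> nth i (chis a alpha (n + k)) 0 = nth i (chis a alpha n) 0.
Proof.
  intros Hi; induction k as [|k IH].
  - rewrite Nat.add_0_r; reflexivity.
  - rewrite Nat.add_succ_r; simpl.
    rewrite app_nth1; [exact IH | rewrite chis_length; lia].
Qed.

Lemma chi_unfold (t : nat) : (1 <= t)%nat ->
  chi a alpha t =
  fold_left Rmax (map (fun i => INR (t - i) / alpha * chi a alpha i) (seq 1 (t - 1)))
            (a t).
Proof.
  intros Ht; destruct t as [|m]; [lia|].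
  unfold chi at 1; replace (S m - 1)%nat with m by lia; simpl chis.
  rewrite app_nth2; rewrite chis_length; [|lia].
  rewrite Nat.sub_diag; simpl nth.
  f_equal; apply map_ext_in; intros i Hi; apply in_seq in Hi.
  f_equal; unfold chi.
  replace m with (i + (m - i))%nat at 1 by lia.
  apply chis_nth_add; lia.
Qed.

Lemma chi_ge_a (t : nat) : (1 <= t)%nat -> a t <= chi a alpha t.
Proof. intros Ht; rewrite chi_unfold by exact Ht; apply fold_left_Rmax_ge_init. Qed.

Lemma chi_ge_chitilde (i t : nat) : (1 <= i)%nat -> (i < t)%nat ->
  INR (t - i) / alpha * chi a alpha i <= chi a alpha t.
Proof.
  intros Hi Hit; rewrite (chi_unfold t) by lia.
  apply fold_left_Rmax_ge_In, in_map_iff.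
  exists i; split; [reflexivity | apply in_seq; lia].
Qed.

Lemma chi_attained (t : nat) : (1 <= t)%nat ->
  chi a alpha t = a t \/
  exists i, (1 <= i)%nat /\ (i < t)%nat /\ chi a alpha t = INR (t - i) / alpha * chi a alpha i.
Proof.
  intros Ht; rewrite (chi_unfold t) by exact Ht.
  destruct (fold_left_Rmax_attained
              (map (fun i => INR (t - i) / alpha * chi a alpha i) (seq 1 (t - 1))) (a t))
    as [H | H]; [left; exact H|].
  right; apply in_map_iff in H; destruct H as [i [Hi Hin]]; apply in_seq in Hin.
  exists i; repeat split; try lia; rewrite <- Hi at 1; reflexivity.
Qed.

Lemma I_t_ge (i t : nat) : (1 <= i)%nat -> (i < t)%nat ->
  chi a alpha t = INR (t - i) / alpha * chi a alpha i -> (i <= I_t a alpha t)%nat.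
Proof.
  intros Hi Hit Hchi; unfold I_t; apply maxidx_ge; [exact Hit|].
  destruct (Req_EM_T (chi a alpha t) (chitilde a alpha i t)) as [_ | Hne]; [reflexivity|].
  exfalso; apply Hne; unfold chitilde; destruct i; [lia | exact Hchi].
Qed.

Hypothesis alpha_pos : 0 < alpha.
Hypothesis a_pos : forall n, (1 <= n)%nat -> 0 < a n.

Lemma chi_pos (t : nat) : (1 <= t)%nat -> 0 < chi a alpha t.
Proof. intros Ht; apply Rlt_le_trans with (a t); [apply a_pos | apply chi_ge_a]; exact Ht. Qed.

Lemma chi_exp_lower_bound (T : nat) : (1 <= T)%nat ->
  exists c, 0 < c /\ forall t, (1 <= t)%nat -> c * exp (nu_of alpha T * INR t) <= chi a alpha t.
Proof.
  intros HT; apply exp_lower_bound_of_lag with (T := T); [exact HT | exact chi_pos|].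
  intros t Ht; rewrite exp_nu_of_mul by assumption.
  replace (INR T) with (INR (t - (t - T))) at 1 by (f_equal; lia).
  apply chi_ge_chitilde; lia.
Qed.

Lemma eventually_a_lt_chi (T : nat) : (1 <= T)%nat ->
  Un_cv (fun n => a n * exp (- nu_of alpha T * INR n)) 0 ->
  exists t0, forall t, (t0 <= t)%nat -> a t < chi a alpha t.
Proof.
  intros HT Hcv.
  destruct (chi_exp_lower_bound T HT) as [c [Hc Hgrow]].
  set (nu := nu_of alpha T) in *.
  destruct (Hcv (c * exp (- nu) / alpha)) as [t0 Ht0].
  { apply Rdiv_lt_0_compat; [|exact alpha_pos].
    apply Rmult_lt_0_compat; [exact Hc | apply exp_pos]. }
  exists (S (S t0)); intros t Ht.
  assert (Hsmall : a t * exp (- nu * INR t) < c * exp (- nu) / alpha).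
  { specialize (Ht0 t ltac:(lia)); unfold R_dist in Ht0; rewrite Rminus_0_r in Ht0.
    eapply Rle_lt_trans; [apply Rle_abs | exact Ht0]. }
  assert (Hprev := Hgrow (t - 1)%nat ltac:(lia)).
  rewrite minus_INR in Hprev by lia; simpl INR in Hprev.
  assert (Hstep := chi_ge_chitilde (t - 1) t ltac:(lia) ltac:(lia)).
  replace (t - (t - 1))%nat with 1%nat in Hstep by lia; simpl INR in Hstep.
  assert (Hsplit : exp (nu * (INR t - 1)) = exp (- nu) * exp (nu * INR t)).
  { rewrite <- exp_plus; f_equal; ring. }
  assert (Hinv : exp (- nu * INR t) * exp (nu * INR t) = 1).
  { rewrite <- exp_plus; replace (- nu * INR t + nu * INR t) with 0 by ring; apply exp_0. }
  rewrite Hsplit in Hprev.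
  assert (He := exp_pos (nu * INR t)).
  apply (Rmult_lt_compat_r (exp (nu * INR t))) in Hsmall; [|exact He].
  rewrite Rmult_assoc, Hinv, Rmult_1_r in Hsmall.
  apply (Rmult_le_compat_r (/ alpha)) in Hprev;
    [|apply Rlt_le, Rinv_0_lt_compat; exact alpha_pos].
  unfold Rdiv in *; nra.
Qed.

Lemma chi_gt_far_chitilde (i t N : nat) :
  (1 <= i)%nat -> 2 * alpha < INR N -> (i + 2 * N <= t)%nat ->
  INR (t - i) / alpha * chi a alpha i < chi a alpha t.
Proof.
  intros Hi HN Hfar.
  assert (HN1 : (1 <= N)%nat) by (destruct N; [simpl in HN; lra | lia]).
  assert (Hij := chi_ge_chitilde i (i + N) Hi ltac:(lia)).
  assert (Hjt := chi_ge_chitilde (i + N) t ltac:(lia) ltac:(lia)).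
  replace (i + N - i)%nat with N in Hij by lia.
  replace (INR (t - (i + N))) with (INR (t - i) - INR N) in Hjt
    by (rewrite !minus_INR, plus_INR by lia; ring).
  assert (Hgap : 2 * INR N <= INR (t - i)).
  { replace 2 with (INR 2) by (simpl; ring); rewrite <- mult_INR; apply le_INR; lia. }
  assert (Hgain := two_step_gain alpha (INR (t - i)) (INR N) (chi a alpha i)
                     alpha_pos HN Hgap (chi_pos i Hi)).
  assert (0 <= (INR (t - i) - INR N) / alpha).
  { apply Rmult_le_pos; [rewrite <- minus_INR by lia; apply pos_INR
                        | apply Rlt_le, Rinv_0_lt_compat; exact alpha_pos]. }
  apply Rmult_le_compat_l with (r := (INR (t - i) - INR N) / alpha) in Hij; [lra | assumption].
Qed.

End Chi.

Theorem lemma5 (alpha : R) (T : nat) (a : nat -> R) :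
  0 < alpha ->
  T_spec alpha T ->
  (forall n : nat, (1 <= n)%nat -> 0 < a n) ->
  Un_cv (fun n : nat => a n * exp (- nu_of alpha T * INR n)) 0 ->
  exists M : nat, forall t : nat, (1 <= t)%nat -> (t - I_t a alpha t <= M)%nat.
Proof.
  intros Halpha [HT _] Ha Hcv.
  destruct (eventually_a_lt_chi a alpha Halpha Ha T HT Hcv) as [t0 Ht0].
  destruct (INR_unbounded (2 * alpha)) as [N HN].
  exists (t0 + 2 * N)%nat; intros t Ht.
  destruct (le_lt_dec t0 t) as [Hlate | Hearly]; [|lia].
  specialize (Ht0 t Hlate).
  destruct (chi_attained a alpha t Ht) as [Heq | [i [Hi [Hit Hchi]]]]; [lra|].
  assert (HI := I_t_ge a alpha i t Hi Hit Hchi).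
  destruct (le_lt_dec (i + 2 * N) t) as [Hfar | Hnear]; [|lia].
  assert (Hlt := chi_gt_far_chitilde a alpha Halpha Ha i t N Hi HN Hfar).
  lra.
Qed.
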